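(* Let $(e_n)$ be a uniformly quasi-greedy basic sequence in a Banach lattice $X$ with uniform quasi-greedy constant $C^\vee_{qg}$. Then for any distinct indices $n_1,\dots,n_m$ and any real numbers $a_1,\dots,a_m$, $$\Big\|\bigvee_{k=1}^m\Big|\sum_{i=1}^k a_ie_{n_i}\Big|\Big\|\le 2\max_i|a_i|\,C^\vee_{qg}\Big\|\sum_{i=1}^m e_{n_i}\Big\|.$$
   Context: Let $(e_n)$ be a semi-normalized basic sequence in a Banach lattice $X$ with span $E$ and biorthogonal functionals $e_n^*$. For $x\in E$, the natural greedy ordering $\rho$ of $x$ is the injective map $\mathbb{N}\to\mathbb{N}$ whose range contains $\{n:e_n^*(x)\ne0\}$ and which lists indices by non-increasing $|e_n^*(x)|$, ties broken by increasing index; $\mathcal{G}_m(x)=\sum_{n=1}^m e^*_{\rho(n)}(x)e_{\rho(n)}$ and $\mathcal{G}^\vee_m(x)=\bigvee_{n=1}^m|\mathcal{G}_n(x)|$. The sequence is uniformly quasi-greedy if $C^\vee_{qg}:=\sup_m\sup_{x\in E,\|x\|=1}\|\mathcal{G}^\vee_m(x)\|<\infty$; $C^\vee_{qg}$ is the uniform quasi-greedy constant. *)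

From HB Require Import structures.
From mathcomp Require Import all_boot all_order all_algebra.
From mathcomp Require Import all_classical all_reals all_analysis.
Set Implicit Arguments. Unset Strict Implicit. Unset Printing Implicit Defensive.
Import Order.TTheory GRing.Theory Num.Theory.
Import numFieldNormedType.Exports.
Local Open Scope classical_set_scope.
Local Open Scope ring_scope.

Section BanachLattice.
Variables (R : realType) (X : completeNormedModType R).

Definition labs (join : X -> X -> X) (x : X) : X := join x (- x).

Record banach_lattice (lex : X -> X -> Prop) (join : X -> X -> X) : Prop := {
  bl_refl : forall x, lex x x;
  bl_antisym : forall x y, lex x y -> lex y x -> x = y;
  bl_trans : forall x y z, lex x y -> lex y z -> lex x z;
  bl_add : forall x y z, lex x y -> lex (x + z) (y + z);
  bl_scale : forall (a : R) x, 0 <= a -> lex 0 x -> lex 0 (a *: x);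
  bl_join_l : forall x y, lex x (join x y);
  bl_join_r : forall x y, lex y (join x y);
  bl_join_min : forall x y z, lex x z -> lex y z -> lex (join x y) z;
  bl_norm : forall x y, lex (labs join x) (labs join y) -> `|x| <= `|y|
}.

Fixpoint joinseq (join : X -> X -> X) (f : nat -> X) (k : nat) : X :=
  match k with
  | 0 => f 0%N
  | k'.+1 => join (joinseq join f k') (f k)
  end.

Definition lin_span (e : nat -> X) : set X :=
  [set x | exists (N : nat) (a : nat -> R), x = \sum_(i < N) a i *: e i].
Definition closed_span (e : nat -> X) : set X := closure (lin_span e).

Definition semi_normalized (e : nat -> X) : Prop :=
  exists c D : R, 0 < c /\ forall n, c <= `|e n| <= D.

Definition basic_sequence (e : nat -> X) : Prop :=
  forall x, closed_span e x ->
  exists! a : nat -> R,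
    (fun N : nat => \sum_(i < N) a i *: e i) @ \oo --> x.

Definition coordinate_functionals (e : nat -> X) (estar : nat -> X -> R) :=
  forall x, closed_span e x -> forall a : nat -> R,
    (fun N : nat => \sum_(i < N) a i *: e i) @ \oo --> x ->
    a = (fun n => estar n x).

Definition natural_greedy_ordering (c : nat -> R) (rho : nat -> nat) : Prop :=
  injective rho /\
  (forall k, c k != 0 -> exists j, rho j = k) /\
  (forall i j, (i < j)%N ->
     `|c (rho j)| < `|c (rho i)| \/
     (`|c (rho i)| = `|c (rho j)| /\ (rho i < rho j)%N)).

(* G_m(x) with respect to the ordering rho (rho 0 = first index) *)
Definition greedy_sum (e : nat -> X) (estar : nat -> X -> R)
  (rho : nat -> nat) (m : nat) (x : X) : X :=
  \sum_(k < m) estar (rho k) x *: e (rho k).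

(* G^vee_m(x) = \/_{n=1}^m |G_n(x)|, for m >= 1 *)
Definition greedy_vee (join : X -> X -> X) (e : nat -> X)
  (estar : nat -> X -> R) (rho : nat -> nat) (m : nat) (x : X) : X :=
  joinseq join (fun k => labs join (greedy_sum e estar rho k.+1 x)) m.-1.

Definition uqg_set (join : X -> X -> X) (e : nat -> X)
  (estar : nat -> X -> R) : set R :=
  [set r | exists (m : nat) (x : X) (rho : nat -> nat),
     (0 < m)%N /\ closed_span e x /\ `|x| = 1 /\
     natural_greedy_ordering (fun n => estar n x) rho /\
     r = `|greedy_vee join e estar rho m x|].

Definition uniformly_quasi_greedy join e estar : Prop :=
  has_ubound (uqg_set join e estar).

Definition Cqg_vee join e estar : R := sup (uqg_set join e estar).

End BanachLattice.

From HB Require Import structures.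
From mathcomp Require Import all_boot all_order all_algebra.
From mathcomp Require Import all_classical all_reals all_analysis.
From mathcomp Require Import ring lra.
Import Order.TTheory GRing.Theory Num.Theory.
Import numFieldNormedType.Exports.
Set Implicit Arguments. Unset Strict Implicit. Unset Printing Implicit Defensive.
Local Open Scope ring_scope.

(* Split a = a+ - a- and decompose a nonnegative coefficient vector b along its
   level sets, b = sum_l t_l 1_(B_l) with sum_l t_l = max b.  In a Banach lattice
   b |-> || \/_k |S_k(b)| || is subadditive and absolutely homogeneous, so it is
   enough to bound it by C ||sum_(i<m) e_(n_i)|| for indicators 1_B.  Listing the
   indices of B first turns the partial sums of 1_B into initial partial sums of
   sum e in the new order, which is the greedy order of the strictly decreasing
   coefficients 1 + eta (m - j); for those, the partial sums are controlled by C
   by definition, and eta -> 0 gives the bound. *)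

Lemma ler_perturbation (R : realFieldType) (x y M : R) :
  (forall eta, 0 < eta -> x <= y + eta * M) -> x <= y.
Proof.
move=> xy; apply/ler_addgt0Pr => eps eps0.
have M1_gt0 : 0 < `|M| + 1 by rewrite ltr_wpDl.
apply: le_trans (xy _ (divr_gt0 eps0 M1_gt0)) _; rewrite lerD2l mulrAC.
rewrite ler_pdivrMr // ler_pM2l //.
by rewrite (le_trans (ler_norm M)) // lerDl.
Qed.

Section LatticeFacts.
Variables (R : realType) (X : completeNormedModType R).
Variables (lex : X -> X -> Prop) (join : X -> X -> X).
Hypothesis HL : banach_lattice lex join.

Lemma lex_subr_ge0 x y : lex x y -> lex 0 (y - x).
Proof. by move=> /(bl_add HL (- x)); rewrite subrr. Qed.

Lemma lex_addl x y z : lex x y -> lex (z + x) (z + y).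
Proof. by rewrite (addrC z x) (addrC z y); apply: (bl_add HL). Qed.

Lemma lex_add x y u v : lex x y -> lex u v -> lex (x + u) (y + v).
Proof. by move=> /(bl_add HL u) xy /(lex_addl y); apply: (bl_trans HL). Qed.

Lemma lex_scale (a : R) x y : 0 <= a -> lex x y -> lex (a *: x) (a *: y).
Proof.
move=> a0 /lex_subr_ge0 /(bl_scale HL a0) /(bl_add HL (a *: x)).
by rewrite add0r scalerBr subrK.
Qed.

Lemma lex_opp x y : lex x y -> lex (- y) (- x).
Proof.
by move=> /lex_subr_ge0 /(bl_add HL (- y)); rewrite add0r addrC addKr.
Qed.

Lemma lex_labs x : lex x (labs join x). Proof. exact: (bl_join_l HL). Qed.

Lemma lex_labsN x : lex (- x) (labs join x). Proof. exact: (bl_join_r HL). Qed.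

Lemma labs_ge0 x : lex 0 (labs join x).
Proof.
have h2 : lex 0 (labs join x + labs join x).
  by rewrite -(subrr x) addrC; apply: lex_add; [apply: lex_labsN|apply: lex_labs].
have half_ge0 : 0 <= (2 : R)^-1 by rewrite invr_ge0.
have := bl_scale HL half_ge0 h2.
by rewrite -mulr2n -(scaler_nat 2 (labs join x)) scalerA mulVf ?pnatr_eq0 // scale1r.
Qed.

Lemma labs_id x : lex 0 x -> labs join x = x.
Proof.
move=> x0; apply: (bl_antisym HL); last exact: lex_labs.
apply: (bl_join_min HL); first exact: (bl_refl HL).
by apply: (bl_trans HL _ x0); rewrite -oppr0; apply: lex_opp.
Qed.

Lemma labs0 : labs join 0 = 0.
Proof. exact/labs_id/(bl_refl HL). Qed.

Lemma labs_triangle x y : lex (labs join (x + y)) (labs join x + labs join y).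
Proof.
apply: (bl_join_min HL); first by apply: lex_add; apply: lex_labs.
by rewrite opprD; apply: lex_add; apply: lex_labsN.
Qed.

Lemma labsZ (a : R) x : lex (labs join (a *: x)) (`|a| *: labs join x).
Proof.
have [a0|a0] := leP 0 a.
  rewrite ger0_norm //; apply: (bl_join_min HL); first exact: lex_scale (lex_labs x).
  by rewrite -scalerN; apply: lex_scale (lex_labsN x).
rewrite ltr0_norm //; have na0 : 0 <= - a by rewrite oppr_ge0 ltW.
apply: (bl_join_min HL); last by rewrite -scaleNr; apply: lex_scale (lex_labs x).
by rewrite -[a *: x]opprK -scalerN -scaleNr; apply: lex_scale (lex_labsN x).
Qed.

Lemma ler_norm_lex x y : lex 0 x -> lex x y -> `|x| <= `|y|.
Proof.
move=> x0 xy; apply: (bl_norm HL).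
by rewrite !labs_id //; apply: (bl_trans HL x0 xy).
Qed.

Lemma joinseq_ub f K k : (k <= K)%N -> lex (f k) (joinseq join f K).
Proof.
elim: K => [|K IH]; first by rewrite leqn0 => /eqP ->; exact: (bl_refl HL).
rewrite leq_eqVlt => /predU1P[->|]; first exact: (bl_join_r HL).
by move=> /IH /(bl_trans HL); apply; apply: (bl_join_l HL).
Qed.

Lemma joinseq_lub f K z : (forall k, (k <= K)%N -> lex (f k) z) ->
  lex (joinseq join f K) z.
Proof.
elim: K => [|K IH] fz; first exact: fz.
apply: (bl_join_min HL); last exact: fz.
by apply: IH => k kK; apply: fz; rewrite (leq_trans kK).
Qed.

Lemma eq_joinseq f g K : (forall k, (k <= K)%N -> f k = g k) ->
  joinseq join f K = joinseq join g K.
Proof.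
elim: K => [|K IH] fg /=; first exact: fg.
by rewrite IH ?fg // => k kK; apply: fg; rewrite (leq_trans kK).
Qed.

Definition partial_sum (f : nat -> X) (b : nat -> R) (k : nat) : X :=
  \sum_(i < k) b i *: f i.

Definition partial_sum_vee (f : nat -> X) (b : nat -> R) (K : nat) : X :=
  joinseq join (fun k => labs join (partial_sum f b k.+1)) K.

Lemma partial_sum_vee_ge0 f b K : lex 0 (partial_sum_vee f b K).
Proof. exact: (bl_trans HL (labs_ge0 _) (joinseq_ub _ (leq0n K))). Qed.

Lemma lex_labs_partial_sum_vee f b K J : (J <= K.+1)%N ->
  lex (labs join (partial_sum f b J)) (partial_sum_vee f b K).
Proof.
case: J => [_|J JK]; last exact: joinseq_ub.
by rewrite /partial_sum big_ord0 labs0; apply: partial_sum_vee_ge0.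
Qed.

Lemma eq_partial_sum_vee f f' b b' K :
  (forall i, (i <= K)%N -> b i *: f i = b' i *: f' i) ->
  partial_sum_vee f b K = partial_sum_vee f' b' K.
Proof.
move=> bf; apply: eq_joinseq => k kK; congr (labs join _).
by apply: eq_bigr => i _; apply: bf; rewrite (leq_trans _ kK) -1?ltnS.
Qed.

Lemma ler_norm_partial_sum_veeD f b1 b2 K :
  `|partial_sum_vee f (fun i => b1 i + b2 i) K|
    <= `|partial_sum_vee f b1 K| + `|partial_sum_vee f b2 K|.
Proof.
apply: le_trans (ler_normD _ _); apply: ler_norm_lex (partial_sum_vee_ge0 _ _ _) _.
apply: joinseq_lub => // k kK; rewrite /partial_sum.
under eq_bigr do rewrite scalerDl; rewrite big_split /=.
by apply: (bl_trans HL) (labs_triangle _ _) _; apply: lex_add => //; apply: joinseq_ub.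
Qed.

Lemma ler_norm_partial_sum_veeZ f t b K :
  `|partial_sum_vee f (fun i => t * b i) K| <= `|t| * `|partial_sum_vee f b K|.
Proof.
rewrite -[`|t|]normr_id -normrZ.
apply: ler_norm_lex (partial_sum_vee_ge0 _ _ _) _.
apply: joinseq_lub => // k kK; rewrite /partial_sum.
under eq_bigr do rewrite -scalerA; rewrite -scaler_sumr.
apply: (bl_trans HL) (labsZ _ _) _.
by apply: lex_scale => //; apply: joinseq_ub.
Qed.

End LatticeFacts.

Section LayerCake.
Variables (R : realType) (m : nat) (N : (nat -> R) -> R) (W : R).
Hypothesis N_ge0 : forall b, 0 <= N b.
Hypothesis N_add : forall b1 b2, N (fun i => b1 i + b2 i) <= N b1 + N b2.
Hypothesis N_scale : forall t b, N (fun i => t * b i) <= `|t| * N b.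
Hypothesis eq_N : forall b b', (forall i, (i < m)%N -> b i = b' i) -> N b = N b'.
Hypothesis N_indicator_le : forall B : pred nat, N (fun i => (B i)%:R) <= W.

Let W_ge0 : 0 <= W. Proof. exact: le_trans (N_ge0 _) (N_indicator_le pred0). Qed.

Lemma layer_cake_le b M : 0 <= M -> (forall i, (i < m)%N -> 0 <= b i <= M) ->
  N b <= M * W.
Proof.
pose supp (b : nat -> R) := [set i : 'I_m | b i != 0].
have [k] := ubnP #|supp b|; elim: k b M => // k IH b M ltk M0 bM.
case: (pickP (fun i : 'I_m => b i != 0)) => [i1 bi1|b_eq0]; last first.
  have b0 i : (i < m)%N -> b i = 0 * b i.
    by move=> im; have /negbFE/eqP -> := b_eq0 (Ordinal im); rewrite mulr0.
  by rewrite (eq_N b0); apply: le_trans (N_scale _ _) _; rewrite normr0 mul0r mulr_ge0.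
(* Peel off the least nonzero level t of b: b = t 1_B + b' with B the support
   of b, where b' stays in [0, M - t] and has a smaller support. *)
case: (@arg_minP _ _ _ i1 (fun i : 'I_m => b i != 0) (fun i : 'I_m => b i) bi1).
move=> i0 bi0 i0_min; set t := b i0; set B : pred nat := fun i => b i != 0.
have /andP[t_ge0 tM] := bM _ (ltn_ord i0).
have t_gt0 : 0 < t by rewrite lt_def bi0.
pose b' i := b i - t * (B i)%:R.
have b'M i : (i < m)%N -> 0 <= b' i <= M - t.
  move=> im; have /andP[bi_ge0 biM] := bM _ im; rewrite /b' /B.
  have [->|bi] := eqVneq (b i) 0; first by rewrite mulr0 subr0 lexx subr_ge0.
  by rewrite mulr1 subr_ge0 lerD2r (i0_min (Ordinal im)) // biM.
have lt_supp : (#|supp b'| < #|supp b|)%N.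
  apply/proper_card/properP; split.
    apply/fintype.subsetP => i; rewrite !inE; apply: contraNN => /eqP bi.
    by rewrite /b' /B bi eqxx mulr0 subr0.
  by exists i0; rewrite !inE // /b' /B bi0 mulr1 subrr eqxx.
have {}IH : N b' <= (M - t) * W.
  by apply: IH; rewrite ?subr_ge0 // (leq_trans lt_supp).
have -> : b = fun i => t * (B i)%:R + b' i by apply: funext => i; rewrite /b' addrC subrK.
apply: le_trans (N_add _ _) _; apply: le_trans (lerD (N_scale _ _) IH) _.
rewrite gtr0_norm //.
apply: le_trans (lerD (ler_wpM2l t_ge0 (N_indicator_le B)) (lexx _)) _.
by rewrite -mulrDl addrC subrK.
Qed.

Lemma signed_layer_cake_le a M : 0 <= M -> (forall i, (i < m)%N -> `|a i| <= M) ->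
  N a <= 2 * M * W.
Proof.
move=> M0 aM; pose pos i := (`|a i| + a i) / 2; pose neg i := (`|a i| - a i) / 2.
have pos_neg_bound i : (i < m)%N ->
    [/\ 0 <= pos i <= M & 0 <= neg i <= M].
  move=> im; have := aM i im; have /andP[] : - `|a i| <= a i <= `|a i| by rewrite -ler_norml.
  by rewrite /pos /neg => aiM ai_ge ai_le; split; apply/andP; split; lra.
have -> : a = fun i => pos i + -1 * neg i by apply: funext => i; rewrite /pos /neg; lra.
apply: le_trans (N_add _ _) _; apply: le_trans (lerD (lexx _) (N_scale _ _)) _.
rewrite normrN normr1 mul1r -mulrA mulr_natl mulr2n.
by apply: lerD; apply: layer_cake_le => // i /pos_neg_bound[].
Qed.

End LayerCake.

Section GreedyOrdering.
Variables (R : realType) (X : completeNormedModType R).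
Variables (lex : X -> X -> Prop) (join : X -> X -> X).
Hypothesis HL : banach_lattice lex join.
Variables (e : nat -> X) (estar : nat -> X -> R).
Hypothesis estar_coord : coordinate_functionals e estar.
Hypothesis uqg : uniformly_quasi_greedy join e estar.
Variables (m : nat) (p : nat -> nat).
Hypothesis p_inj : forall i j, (i < m)%N -> (j < m)%N -> p i = p j -> i = j.

Let ep j := e (p j).

Definition coef (c : nat -> R) (i : nat) : R := \sum_(j < m) (p j == i)%:R * c j.

Definition index_bound : nat := (\max_(j < m) p j).+1.

Lemma ltn_index_bound j : (j < m)%N -> (p j < index_bound)%N.
Proof. by move=> jm; rewrite ltnS (leq_bigmax (Ordinal jm)). Qed.

Lemma sum_coef c n : (index_bound <= n)%N ->
  \sum_(i < n) coef c i *: e i = partial_sum ep c m.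
Proof.
move=> bn; rewrite /coef; under eq_bigr do rewrite scaler_suml.
rewrite exchange_big; apply: eq_bigr => j _.
rewrite (eq_bigr (fun i : 'I_n => if i == p j :> nat then c j *: e i else 0)).
  rewrite -big_mkcond (big_ord1_eq _ (fun i => c j *: e i)).
  by rewrite (leq_trans (ltn_index_bound (ltn_ord j))).
by move=> i _; rewrite eq_sym; case: eqP => _; rewrite ?mul1r ?mul0r ?scale0r.
Qed.

Lemma coef_index c j : (j < m)%N -> coef c (p j) = c j.
Proof.
move=> jm; rewrite /coef (bigD1 (Ordinal jm)) //= eqxx mul1r big1 ?addr0 //.
move=> i /eqP ij; case: eqP => [/(p_inj (ltn_ord i) jm) ji|_]; last by rewrite mul0r.
by case: ij; apply: val_inj.
Qed.

Lemma coef_out c i : (forall j, (j < m)%N -> p j != i) -> coef c i = 0.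
Proof.
by move=> pi; rewrite /coef big1 // => j _; rewrite (negbTE (pi _ (ltn_ord j))) mul0r.
Qed.

Lemma closed_span_partial_sum c : closed_span e (partial_sum ep c m).
Proof. by apply: subset_closure; exists index_bound, (coef c); rewrite sum_coef. Qed.

Lemma estar_partial_sum c i : estar i (partial_sum ep c m) = coef c i.
Proof.
suff -> : coef c = fun i => estar i (partial_sum ep c m) by [].
apply: estar_coord; first exact: closed_span_partial_sum.
by apply: cvg_near_cst; near=> n; apply: sum_coef; near: n; apply: nbhs_infty_ge.
Unshelve. all: by end_near.
Qed.

Lemma partial_sum_eq0 c : partial_sum ep c m = 0 -> forall j, (j < m)%N -> c j = 0.
Proof.
move=> S0 j jm; rewrite -(coef_index c jm) -estar_partial_sum S0.
have -> : (0 : X) = partial_sum ep (fun=> 0) m.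
  by rewrite /partial_sum big1 // => i _; rewrite scale0r.
by rewrite estar_partial_sum coef_index.
Qed.

Lemma norm_partial_sum_gt0 c j : (j < m)%N -> c j != 0 -> 0 < `|partial_sum ep c m|.
Proof.
move=> jm cj; rewrite normr_gt0; apply: contraNN cj => /eqP S0.
by rewrite (partial_sum_eq0 S0 jm).
Qed.

(* A natural greedy ordering is defined on all of nat: past m it lists, in
   increasing order, fresh indices where the coefficients vanish. *)
Definition pad_ordering (j : nat) : nat :=
  if (j < m)%N then p j else (index_bound + (j - m))%N.

Lemma coef_pad_ordering_out c j : (m <= j)%N -> coef c (pad_ordering j) = 0.
Proof.
move=> mj; rewrite /pad_ordering ltnNge mj; apply: coef_out => i im.
by rewrite neq_ltn (leq_trans (ltn_index_bound im)) ?leq_addr.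
Qed.

Section StrictlyDecreasing.
Variable c : nat -> R.
Hypothesis c_gt0 : forall i, (i < m)%N -> 0 < c i.
Hypothesis c_decr : forall i j, (i < j)%N -> (j < m)%N -> c j < c i.

Lemma natural_greedy_ordering_pad : natural_greedy_ordering (coef c) pad_ordering.
Proof.
split; [|split].
- move=> i j; rewrite /pad_ordering.
  case: (ltnP i m) => im; case: (ltnP j m) => jm.
  + exact: p_inj.
  + by move=> pij; have := ltn_index_bound im; rewrite pij ltnNge leq_addr.
  + by move=> pij; have := ltn_index_bound jm; rewrite -pij ltnNge leq_addr.
  + by move/eqP; rewrite eqn_add2l => /eqP /(congr1 (addn^~ m)); rewrite !subnK.
- move=> k ck; have [j /eqP pjk|pk] := pickP (fun j : 'I_m => p j == k).
    by exists j; rewrite /pad_ordering ltn_ord.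
  by move: ck; rewrite coef_out ?eqxx // => j jm; rewrite (pk (Ordinal jm)).
- move=> i j ij; case: (ltnP j m) => jm.
    have im := ltn_trans ij jm.
    by left; rewrite /pad_ordering im jm !coef_index // !gtr0_norm ?c_gt0 ?c_decr.
  rewrite (coef_pad_ordering_out c jm) normr0; case: (ltnP i m) => im.
    by left; rewrite /pad_ordering im coef_index // normr_gt0 gt_eqF ?c_gt0.
  right; rewrite (coef_pad_ordering_out c im) normr0; split => //.
  rewrite /pad_ordering (ltnNge i m) im (ltnNge j m) jm ltn_add2l.
  by rewrite ltn_sub2r ?(leq_ltn_trans im ij).
Qed.

Lemma uqg_set_partial_sum_vee : (0 < m)%N -> `|partial_sum ep c m| = 1 ->
  uqg_set join e estar `|partial_sum_vee join ep c m.-1|.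
Proof.
move=> m0 S1; exists m, (partial_sum ep c m), pad_ordering.
split=> //; split; first exact: closed_span_partial_sum.
split=> //; split.
  have -> : (fun n => estar n (partial_sum ep c m)) = coef c.
    by apply: funext => i; apply: estar_partial_sum.
  exact: natural_greedy_ordering_pad.
congr `|_|; apply: (@eq_partial_sum_vee _ _ join _ (fun k => e (pad_ordering k)) _
  (fun k => estar (pad_ordering k) (partial_sum ep c m))) => i iK.
have im : (i < m)%N by rewrite (leq_ltn_trans iK) // prednK.
by rewrite /pad_ordering im estar_partial_sum coef_index.
Qed.

End StrictlyDecreasing.

Lemma norm_partial_sum_vee_le_Cqg c : (0 < m)%N ->
  (forall i, (i < m)%N -> 0 < c i) ->
  (forall i j, (i < j)%N -> (j < m)%N -> c j < c i) ->
  `|partial_sum_vee join ep c m.-1| <= Cqg_vee join e estar * `|partial_sum ep c m|.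
Proof.
move=> m0 c_gt0 c_decr; set r := `|partial_sum ep c m|.
have r_gt0 : 0 < r by apply: (norm_partial_sum_gt0 m0); rewrite gt_eqF ?c_gt0.
pose c' i := r^-1 * c i.
have c'_vee_le : `|partial_sum_vee join ep c' m.-1| <= Cqg_vee join e estar.
  apply: (ub_le_sup uqg); apply: uqg_set_partial_sum_vee => //.
  - by move=> i im; rewrite mulr_gt0 ?invr_gt0 ?c_gt0.
  - by move=> i j ij jm; rewrite ltr_pM2l ?invr_gt0 ?c_decr.
  rewrite /partial_sum; under eq_bigr do rewrite -scalerA; rewrite -scaler_sumr.
  by rewrite normrZ gtr0_norm ?invr_gt0 // mulVf ?gt_eqF.
have -> : c = fun i => r * c' i by apply: funext => i; rewrite mulrA mulfV ?mul1r ?gt_eqF.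
apply: le_trans (ler_norm_partial_sum_veeZ HL _ _ _ _) _.
by rewrite gtr0_norm // mulrC ler_pM2r.
Qed.

End GreedyOrdering.

Definition front_order (m : nat) (B : pred nat) : seq nat :=
  [seq i <- iota 0 m | B i] ++ [seq i <- iota 0 m | predC B i].

Lemma perm_front_order m B : perm_eq (front_order m B) (iota 0 m).
Proof. by rewrite /front_order perm_filterC. Qed.

Lemma size_front_order m B : size (front_order m B) = m.
Proof. by rewrite (perm_size (perm_front_order m B)) size_iota. Qed.

Lemma nth_front_order_lt m B j : (j < m)%N -> (nth 0 (front_order m B) j < m)%N.
Proof.
move=> jm; have : nth 0 (front_order m B) j \in front_order m B.
  by rewrite mem_nth // size_front_order.
by rewrite (perm_mem (perm_front_order m B)) mem_iota.
Qed.

Lemma nth_front_order_inj m B i j : (i < m)%N -> (j < m)%N ->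
  nth 0 (front_order m B) i = nth 0 (front_order m B) j -> i = j.
Proof.
move=> im jm /eqP; rewrite nth_uniq ?size_front_order // => [/eqP //|].
by rewrite (perm_uniq (perm_front_order m B)) iota_uniq.
Qed.

Lemma sum_front_order (V : nmodType) m B (F : nat -> V) :
  \sum_(j < m) F (nth 0 (front_order m B) j) = \sum_(i < m) F i.
Proof.
rewrite -(big_mkord xpredT F) /index_iota subn0 -(perm_big _ (perm_front_order m B)).
by rewrite (big_nth 0) size_front_order big_mkord.
Qed.

Lemma take_front_order m B k : (k < m)%N ->
  take (count B (iota 0 k.+1)) (front_order m B) = [seq i <- iota 0 k.+1 | B i].
Proof.
move=> km; rewrite /front_order -(subnKC km) iotaD filter_cat -catA take_size_cat //.
by rewrite size_filter.
Qed.

Section IndicatorCoefficients.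
Variables (R : realType) (X : completeNormedModType R).
Variables (lex : X -> X -> Prop) (join : X -> X -> X).
Hypothesis HL : banach_lattice lex join.
Variables (e : nat -> X) (estar : nat -> X -> R).
Hypothesis estar_coord : coordinate_functionals e estar.
Hypothesis uqg : uniformly_quasi_greedy join e estar.

Let C := Cqg_vee join e estar.

Lemma Cqg_vee_ge0 : 0 <= C.
Proof.
have inj1 : forall i j, (i < 1)%N -> (j < 1)%N -> 0%N = 0%N -> i = j by case=> [|//] [|//].
have S_gt0 := @norm_partial_sum_gt0 _ _ _ _ estar_coord 1 _ inj1 (fun=> 1) 0 isT (oner_neq0 R).
rewrite -(pmulr_lge0 _ S_gt0); apply: le_trans (normr_ge0 _) _.
by apply: (norm_partial_sum_vee_le_Cqg HL estar_coord uqg inj1) => // i [|j].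
Qed.

Lemma norm_partial_sum_vee_nonincreasing_le m p c : (0 < m)%N ->
  (forall i j, (i < m)%N -> (j < m)%N -> p i = p j -> i = j) ->
  (forall i, (i < m)%N -> 0 <= c i) ->
  (forall i j, (i <= j)%N -> (j < m)%N -> c j <= c i) ->
  `|partial_sum_vee join (fun j => e (p j)) c m.-1|
    <= C * `|partial_sum (fun j => e (p j)) c m|.
Proof.
move=> m0 p_inj c_ge0 c_noninc; set ep := fun j => e (p j).
pose K := \sum_(j < m) (m - j)%:R * `|ep j|.
apply: (@ler_perturbation _ _ _ (2 * C * K)) => eta eta_gt0.
pose d j := eta * (m - j)%:R; pose cd j := c j + d j.
have d_gt0 i : (i < m)%N -> 0 < d i by move=> im; rewrite mulr_gt0 // ltr0n subn_gt0.
have d_decr i j : (i < j)%N -> (j < m)%N -> d j < d i.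
  by move=> ij jm; rewrite ltr_pM2l // ltr_nat ltn_sub2l ?(ltn_trans ij jm).
have cd_gt0 i : (i < m)%N -> 0 < cd i by move=> im; rewrite ltr_wpDl ?c_ge0 ?d_gt0.
have cd_decr i j : (i < j)%N -> (j < m)%N -> cd j < cd i.
  by move=> ij jm; apply: ler_ltD; [apply: c_noninc (ltnW ij) jm|apply: d_decr].
have Vcd := norm_partial_sum_vee_le_Cqg HL estar_coord uqg p_inj m0 cd_gt0 cd_decr.
have Vd := norm_partial_sum_vee_le_Cqg HL estar_coord uqg p_inj m0 d_gt0 d_decr.
have Vc : `|partial_sum_vee join ep c m.-1|
    <= `|partial_sum_vee join ep cd m.-1| + `|partial_sum_vee join ep d m.-1|.
  have -> : c = fun i => cd i + -1 * d i by apply: funext => i; rewrite /cd mulN1r addrK.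
  apply: le_trans (ler_norm_partial_sum_veeD HL _ _ _ _) _; rewrite lerD2l.
  by apply: le_trans (ler_norm_partial_sum_veeZ HL _ _ _ _) _; rewrite normrN normr1 mul1r.
have Scd : `|partial_sum ep cd m| <= `|partial_sum ep c m| + `|partial_sum ep d m|.
  suff -> : partial_sum ep cd m = partial_sum ep c m + partial_sum ep d m by apply: ler_normD.
  by rewrite /partial_sum -big_split; apply: eq_bigr => j _; rewrite scalerDl.
have Sd : `|partial_sum ep d m| <= eta * K.
  rewrite mulr_sumr; apply: le_trans (ler_norm_sum _ _ _) _; apply: ler_sum => j _.
  by rewrite normrZ mulrA ger0_norm ?(ltW (d_gt0 _ (ltn_ord j))).
have C0 := Cqg_vee_ge0; rewrite -/C in Vcd Vd.
have CSd := ler_wpM2l C0 Sd.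
apply: le_trans Vc _; apply: le_trans (lerD Vcd Vd) _.
apply: le_trans (lerD (ler_wpM2l C0 Scd) CSd) _.
rewrite mulrDr -addrA lerD2l.
apply: le_trans (lerD CSd (lexx _)) _.
by rewrite [X in _ <= X](_ : _ = C * (eta * K) + C * (eta * K)) //; ring.
Qed.

Lemma partial_sum_indicator (f : nat -> X) m (B : pred nat) k : (k < m)%N ->
  partial_sum f (fun i => (B i)%:R) k.+1 =
  partial_sum (fun j => f (nth 0 (front_order m B) j)) (fun=> 1) (count B (iota 0 k.+1)).
Proof.
move=> km; rewrite /partial_sum.
transitivity (\sum_(i < k.+1 | B i) f i).
  rewrite [RHS]big_mkcond; apply: eq_bigr => i _.
  by case: (B i); rewrite ?scale1r ?scale0r.
rewrite -big_mkord /index_iota subn0 -big_filter -(take_front_order B km) (big_nth 0).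
have cnt_le : (count B (iota 0 k.+1) <= size (front_order m B))%N.
  by rewrite size_front_order (leq_trans (count_size _ _)) // size_iota.
rewrite size_takel // big_mkord; apply: eq_bigr => j _.
by rewrite nth_take // scale1r.
Qed.

Lemma lex_partial_sum_vee_indicator (f : nat -> X) m (B : pred nat) : (0 < m)%N ->
  lex (partial_sum_vee join f (fun i => (B i)%:R) m.-1)
      (partial_sum_vee join (fun j => f (nth 0 (front_order m B) j)) (fun=> 1) m.-1).
Proof.
move=> m0; apply: (joinseq_lub HL) => k km.
have km' : (k < m)%N by rewrite -(prednK m0) ltnS.
rewrite (partial_sum_indicator f B km').
apply: (lex_labs_partial_sum_vee HL).
by rewrite prednK // (leq_trans (count_size _ _)) // size_iota.
Qed.

Lemma norm_partial_sum_vee_indicator_le m n (B : pred nat) : (0 < m)%N ->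
  (forall i j, (i < m)%N -> (j < m)%N -> n i = n j -> i = j) ->
  `|partial_sum_vee join (fun i => e (n i)) (fun i => (B i)%:R) m.-1|
    <= C * `|\sum_(i < m) e (n i)|.
Proof.
move=> m0 n_inj; set sigma := nth 0 (front_order m B).
have p_inj i j : (i < m)%N -> (j < m)%N -> n (sigma i) = n (sigma j) -> i = j.
  move=> im jm /(n_inj _ _ (nth_front_order_lt B im) (nth_front_order_lt B jm)).
  exact: nth_front_order_inj.
apply: le_trans (ler_norm_lex HL (partial_sum_vee_ge0 HL _ _ _)
  (lex_partial_sum_vee_indicator (fun i => e (n i)) B m0)) _.
apply: le_trans (norm_partial_sum_vee_nonincreasing_le m0 p_inj _ _) _ => //.
rewrite /partial_sum; under eq_bigr do rewrite scale1r.
by rewrite (sum_front_order _ _ (fun i => e (n i))).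
Qed.

End IndicatorCoefficients.

Theorem corollary3p22 (R : realType) (X : completeNormedModType R)
  (lex : X -> X -> Prop) (join : X -> X -> X)
  (e : nat -> X) (estar : nat -> X -> R) :
  banach_lattice lex join ->
  semi_normalized e -> basic_sequence e -> coordinate_functionals e estar ->
  uniformly_quasi_greedy join e estar ->
  forall (m : nat) (n : nat -> nat) (a : nat -> R),
    (0 < m)%N ->
    (forall i j, (i < m)%N -> (j < m)%N -> n i = n j -> i = j) ->
    `| joinseq join (fun k => labs join (\sum_(i < k.+1) a i *: e (n i))) m.-1 |
    <= 2 * (\big[Num.max/0]_(i < m) `|a i|) * Cqg_vee join e estar
         * `| \sum_(i < m) e (n i) |.
Proof.
move=> HL _ _ estar_coord uqg m n a m0 n_inj.
pose N b := `|partial_sum_vee join (fun i => e (n i)) b m.-1|.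
rewrite -mulrA; apply: (@signed_layer_cake_le _ m N).
- by move=> b; apply: normr_ge0.
- by move=> b1 b2; rewrite /N; apply: (ler_norm_partial_sum_veeD HL).
- by move=> t b; rewrite /N; apply: (ler_norm_partial_sum_veeZ HL).
- move=> b b' bb'; congr `|_|; apply: eq_partial_sum_vee => i iK.
  by rewrite bb' // -(prednK m0) ltnS.
- by move=> B; apply: (norm_partial_sum_vee_indicator_le HL estar_coord uqg B m0 n_inj).
- exact: bigmax_ge_id.
- by move=> i im; apply: (le_bigmax 0 (fun i : 'I_m => `|a i|) (Ordinal im)).
Qed.
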